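(* Let $\vec s:[0,1]\to\mathbb{R}^2$ and $\mathbf{\Gamma}=\operatorname{range}(\vec s)$ be as defined in the context. Then $\mathbf{\Gamma}$ is a simple curve from $\vec s(0)=(0,0)$ to $\vec s(1)=\left(0,\frac{5^3(e-1)^3}{6^3\cdot 8\pi(e^3-1)}\right)$.
   Context: Construction. For reals $a<b$ define $\varphi_{a,b}:[a,b]\to\mathbb{R}$ by $\varphi_{a,b}(t)=\frac{b-a}{4}\sin\frac{2\pi(t-a)}{b-a}$, and $\xi_{a,b}:[a,b]\to\mathbb{R}$ by $\xi_{a,b}(t)=-\varphi_{a,\frac{a+b}{2}}(t)$ for $a\le t\le\frac{a+b}{2}$ and $\xi_{a,b}(t)=\varphi_{\frac{a+b}{2},b}(t)$ for $\frac{a+b}{2}\le t\le b$. For $a<b$ and a positive integer $n$, let $d_i=\frac{a+5b}{6}+i\frac{b-a}{6n}$ for $0\le i\le n$, and define $\psi_{a,b,n}:[a,b]\to\mathbb{R}$ by $\psi_{a,b,n}(t)=\varphi_{a,d_0}(t)$ for $a\le t\le d_0$ and $\psi_{a,b,n}(t)=\xi_{d_{i-1},d_i}(t)$ for $d_{i-1}\le t\le d_i$, $1\le i\le n$. Fix a standard enumeration $M_1,M_2,\dots$ of deterministic Turing machines taking positive integer inputs, and let $\tau(n)\in\mathbb{N}\cup\{\infty\}$ be the number of steps executed by $M_n$ on input $n$ ($\infty$ if it does not halt). For $n\in\mathbb{N}$ let $t_n=1-e^{-n}$, and for $n\ge1$ let $t_n^-=\frac{t_{n-1}+4t_n}{5}$,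 $t_n^+=\frac{6t_n-t_{n-1}}{5}$. Define $a_x:[0,1]\to\mathbb{R}$ by $a_x(t)=-2^{-(n+\tau(n))}\xi_{t_n^-,t_n^+}(t)$ if $t_n^-\le t<t_n^+$ for some $n\ge1$, and $a_x(t)=0$ if no such $n$ exists, with the convention $2^{-\infty}=0$. Define $a_y:[0,1]\to\mathbb{R}$ by $a_y(t)=\psi_{t_{n-1},t_n,n}(t)$ where $n$ is the unique positive integer with $t_{n-1}\le t<t_n$ (for $0\le t<1$), and $a_y(1)=0$. Let $v_x(t)=\int_0^t a_x$, $v_y(t)=\int_0^t a_y$, $s_x(t)=\int_0^t v_x$, $s_y(t)=\int_0^t v_y$, and $\vec s=(s_x,s_y)$; $\mathbf{\Gamma}=\operatorname{range}(\vec s)$. A curve is simple if it is the range of a one-to-one continuous map from a compact interval. *)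

From Stdlib Require Import Reals ClassicalEpsilon.
From Coquelicot Require Import Coquelicot.
Open Scope R_scope.

Definition phi (a b t : R) : R := (b - a) / 4 * sin (2 * PI * (t - a) / (b - a)).

(* xi_{a,b}: -phi_{a,(a+b)/2} on the first half, phi_{(a+b)/2,b} on the second
   (both pieces vanish at the midpoint, so the overlap is consistent). *)
Definition xi (a b t : R) : R :=
  if Rle_dec t ((a + b) / 2) then - phi a ((a + b) / 2) t
  else phi ((a + b) / 2) b t.

Definition dpt (a b : R) (n i : nat) : R :=
  (a + 5 * b) / 6 + INR i * (b - a) / (6 * INR n).

(* psi_{a,b,n}: phi_{a,d_0} on [a,d_0], xi_{d_{i-1},d_i} on [d_{i-1},d_i].
   Adjacent pieces agree (value 0) at the shared endpoints, so choosing any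
   admissible i is well defined. *)
Definition psi (a b : R) (n : nat) (t : R) : R :=
  if Rle_dec t (dpt a b n 0) then phi a (dpt a b n 0) t
  else match excluded_middle_informative
         (exists i : nat, (1 <= i <= n)%nat /\
            dpt a b n (i - 1) <= t <= dpt a b n i) with
       | left H =>
           let i := proj1_sig (constructive_indefinite_description _ H) in
           xi (dpt a b n (i - 1)) (dpt a b n i) t
       | right _ => 0
       end.

Definition tn (n : nat) : R := 1 - exp (- INR n).
Definition tminus (n : nat) : R := (tn (n - 1) + 4 * tn n) / 5.
Definition tplus (n : nat) : R := (6 * tn n - tn (n - 1)) / 5.

(* 2^{-(n + tau n)}, with 2^{-oo} = 0; tau n = None encodes "M_n does not halt
   on input n" (tau n = infinity). *)
Definition coef (tau : nat -> option nat) (n : nat) : R :=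
  match tau n with
  | Some k => / (2 ^ (n + k))
  | None => 0
  end.

(* a_x : the intervals [t_n^-, t_n^+) are pairwise disjoint, so n is unique. *)
Definition a_x (tau : nat -> option nat) (t : R) : R :=
  match excluded_middle_informative
      (exists n : nat, (1 <= n)%nat /\ tminus n <= t < tplus n) with
  | left H =>
      let n := proj1_sig (constructive_indefinite_description _ H) in
      - coef tau n * xi (tminus n) (tplus n) t
  | right _ => 0
  end.

(* a_y(t) = psi_{t_{n-1},t_n,n}(t) for the unique n >= 1 with t_{n-1} <= t < t_n
   (0 <= t < 1); a_y(1) = 0 (and 0 outside [0,1), never used). *)
Definition a_y (t : R) : R :=
  match excluded_middle_informative
      (exists n : nat, (1 <= n)%nat /\ tn (n - 1) <= t < tn n) with
  | left H =>
      let n := proj1_sig (constructive_indefinite_description _ H) in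
      psi (tn (n - 1)) (tn n) n t
  | right _ => 0
  end.

Definition v_x (tau : nat -> option nat) (t : R) : R := RInt (a_x tau) 0 t.
Definition v_y (t : R) : R := RInt a_y 0 t.
Definition s_x (tau : nat -> option nat) (t : R) : R := RInt (v_x tau) 0 t.
Definition s_y (t : R) : R := RInt v_y 0 t.

Definition s_vec (tau : nat -> option nat) (t : R) : R * R := (s_x tau t, s_y t).

Definition Gamma (tau : nat -> option nat) (p : R * R) : Prop :=
  exists t, 0 <= t <= 1 /\ s_vec tau t = p.

Definition continuous_on_Icc (c d : R) (g : R -> R * R) : Prop :=
  forall x, c <= x <= d ->
    filterlim g (within (fun y => c <= y <= d) (locally x)) (locally (g x)).

Definition simple_curve_from_to (S : R * R -> Prop) (p q : R * R) : Prop :=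
  exists (c d : R) (g : R -> R * R),
    c <= d /\
    continuous_on_Icc c d g /\
    (forall x y, c <= x <= d -> c <= y <= d -> g x = g y -> x = y) /\
    (forall z, S z <-> exists u, c <= u <= d /\ g u = z) /\
    g c = p /\ g d = q.

(* Each interval [[t_(n-1), t_n]] carries, in [a_y], one large sine bump followed by [n] small
   antisymmetric bumps.  Integrating twice, the large bump raises [s_y] by (length)^3/(8 pi) and
   stops again, while each antisymmetric bump makes [s_y] dip slightly and come back; summing the
   resulting geometric series of ratio e^-3 gives [s_y 1], and [s_x] returns to 0 after every
   window.  If [M_n] halts, the bump of [a_x] in the window around [t_n] pushes [s_x] off the axis
   exactly while [s_y] dips, so the curve does not retrace itself; if it does not halt, the curve
   retraces a small segment of the y-axis, and skipping the dips in the parametrisation restores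
   injectivity.  Points of the axis are then separated by [s_y], which increases along the ramps,
   and points off the axis by the disjoint [s_y]-ranges of the windows and the monotonicity of
   [s_x] on each half-window. *)

From Stdlib Require Import Reals Lra Lia ClassicalEpsilon.
From Coquelicot Require Import Coquelicot.
Open Scope R_scope.

(** * Sine bumps and their primitives *)

Definition phi_prim (a b t : R) : R :=
  (b - a) ^ 2 / (8 * PI) * (1 - cos (2 * PI * (t - a) / (b - a))).
Definition phi_prim2 (a b t : R) : R :=
  (b - a) ^ 2 / (8 * PI) * ((t - a) - (b - a) / (2 * PI) * sin (2 * PI * (t - a) / (b - a))).

Lemma PI_ge_3 : 3 <= PI.
Proof. generalize PI2_3_2; lra. Qed.

Lemma is_derive_phi_prim a b t : a < b -> is_derive (phi_prim a b) t (phi a b t).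
Proof.
  intros Hab; unfold phi_prim, phi; auto_derive; [easy|].
  generalize PI_RGT_0; intros; unfold Rminus, Rdiv; field; lra.
Qed.

Lemma is_derive_phi_prim2 a b t : a < b -> is_derive (phi_prim2 a b) t (phi_prim a b t).
Proof.
  intros Hab; unfold phi_prim, phi_prim2; auto_derive; [easy|].
  generalize PI_RGT_0; intros; unfold Rminus, Rdiv; field; lra.
Qed.

Lemma continuous_phi a b t : continuous (phi a b) t.
Proof.
  unfold phi; apply (continuous_mult (fun _ => (b - a) / 4)); [apply continuous_const|].
  apply (continuous_comp _ sin); [|apply continuity_pt_filterlim, continuity_sin].
  apply (ex_derive_continuous (fun x => 2 * PI * (x - a) / (b - a))); auto_derive; easy.
Qed.

Lemma continuous_phi_prim a b t : a < b -> continuous (phi_prim a b) t.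
Proof.
  intros; apply (ex_derive_continuous (phi_prim a b)); eexists; now apply is_derive_phi_prim.
Qed.

Lemma phi_left a b : a < b -> phi a b a = 0.
Proof.
  intros; unfold phi; replace (2 * PI * (a - a) / (b - a)) with 0 by (field; lra).
  rewrite sin_0; ring.
Qed.

Lemma phi_right a b : a < b -> phi a b b = 0.
Proof.
  intros; unfold phi; replace (2 * PI * (b - a) / (b - a)) with (2 * PI) by (field; lra).
  rewrite sin_2PI; ring.
Qed.

Lemma phi_prim_left a b : a < b -> phi_prim a b a = 0.
Proof.
  intros; unfold phi_prim; replace (2 * PI * (a - a) / (b - a)) with 0 by (field; lra).
  rewrite cos_0; ring.
Qed.

Lemma phi_prim_right a b : a < b -> phi_prim a b b = 0.
Proof.
  intros; unfold phi_prim; replace (2 * PI * (b - a) / (b - a)) with (2 * PI) by (field; lra).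
  rewrite cos_2PI; ring.
Qed.

Lemma phi_prim2_left a b : a < b -> phi_prim2 a b a = 0.
Proof.
  intros; unfold phi_prim2; replace (2 * PI * (a - a) / (b - a)) with 0 by (field; lra).
  rewrite sin_0; ring.
Qed.

Lemma phi_prim2_right a b : a < b -> phi_prim2 a b b = (b - a) ^ 3 / (8 * PI).
Proof.
  intros; unfold phi_prim2; replace (2 * PI * (b - a) / (b - a)) with (2 * PI) by (field; lra).
  rewrite sin_2PI; generalize PI_RGT_0; intros; field; lra.
Qed.

Lemma Rabs_phi_le a b t : a < b -> Rabs (phi a b t) <= (b - a) / 4.
Proof.
  intros; unfold phi; rewrite Rabs_mult, (Rabs_right ((b - a) / 4)) by lra.
  generalize (Rabs_pos (sin (2 * PI * (t - a) / (b - a))));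
  assert (Rabs (sin (2 * PI * (t - a) / (b - a))) <= 1) by apply Rabs_le, SIN_bound.
  nra.
Qed.

Lemma sin_sub_lt x y : x < y -> sin y - sin x < y - x.
Proof.
  intros Hxy; rewrite form4; set (z := (y - x) / 2).
  assert (Hz : 0 < z) by (unfold z; lra).
  assert (Hsin : Rabs (sin z) < z).
  { apply Rabs_def1; [now apply sin_lt_x|].
    destruct (Rle_lt_dec z 1); [|generalize (SIN_bound z); lra].
    assert (0 < sin z) by (apply sin_gt_0; generalize PI_ge_3; lra); lra. }
  assert (Rabs (cos ((y + x) / 2)) <= 1) by apply Rabs_le, COS_bound.
  generalize (Rle_abs (cos ((y + x) / 2) * sin z)); rewrite Rabs_mult.
  generalize (Rabs_pos (sin z)); unfold z in *; nra.
Qed.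

Lemma phi_prim2_lt a b s t : a < b -> s < t -> phi_prim2 a b s < phi_prim2 a b t.
Proof.
  intros Hab Hst; generalize PI_RGT_0; intros.
  set (k := (b - a) / (2 * PI)).
  assert (Hk : 0 < k) by (apply Rdiv_lt_0_compat; lra).
  assert (Hang : forall u, 2 * PI * (u - a) / (b - a) = (u - a) / k)
    by (intros; unfold k; field; lra).
  assert (Hc : 0 < (b - a) ^ 2 / (8 * PI)) by (apply Rdiv_lt_0_compat; nra).
  unfold phi_prim2; rewrite !Hang; fold k; apply Rmult_lt_compat_l; [easy|].
  assert ((s - a) / k < (t - a) / k) by (apply Rmult_lt_compat_r; [apply Rinv_0_lt_compat|]; lra).
  generalize (sin_sub_lt _ _ H0); intros Hs.
  assert (Hks : k * (sin ((t - a) / k) - sin ((s - a) / k)) < k * ((t - a) / k - (s - a) / k)) by nra.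
  replace (k * ((t - a) / k - (s - a) / k)) with (t - s) in Hks by (field; lra).
  lra.
Qed.

Lemma phi_prim2_le a b s t : a < b -> s <= t -> phi_prim2 a b s <= phi_prim2 a b t.
Proof. intros Hab Hst; destruct (Req_dec s t) as [->|]; [lra|apply Rlt_le, phi_prim2_lt; lra]. Qed.

Lemma phi_prim2_bounds a b t :
  a < b -> a <= t <= b -> 0 <= phi_prim2 a b t <= (b - a) ^ 3 / (8 * PI).
Proof.
  intros; rewrite <- (phi_prim2_left a b), <- (phi_prim2_right a b) by easy.
  split; apply phi_prim2_le; lra.
Qed.

Lemma phi_prim2_three_quarters a b : a < b ->
  phi_prim2 a b (a + 3 / 4 * (b - a)) = (b - a) ^ 3 / (8 * PI) * (3 / 4 + 1 / (2 * PI)).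
Proof.
  intros; generalize PI_RGT_0; intros; unfold phi_prim2.
  replace (2 * PI * (a + 3 / 4 * (b - a) - a) / (b - a)) with (3 * (PI / 2)) by (field; lra).
  rewrite sin_3PI2; field; lra.
Qed.

Lemma xi_left a b t : a <= t <= (a + b) / 2 -> xi a b t = - phi a ((a + b) / 2) t.
Proof. intros; unfold xi; destruct Rle_dec; [easy|lra]. Qed.

Lemma xi_right a b t : a < b -> (a + b) / 2 <= t <= b -> xi a b t = phi ((a + b) / 2) b t.
Proof.
  intros; unfold xi; destruct Rle_dec as [Ht|]; [|easy].
  replace t with ((a + b) / 2) by lra; rewrite phi_right, phi_left by lra; ring.
Qed.

Lemma xi_at_left a b : a < b -> xi a b a = 0.
Proof. intros; rewrite xi_left, phi_left by lra; ring. Qed.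

Lemma xi_at_right a b : a < b -> xi a b b = 0.
Proof. intros; rewrite xi_right, phi_right by lra; easy. Qed.

Lemma Rabs_xi_le a b t : a < b -> Rabs (xi a b t) <= (b - a) / 8.
Proof.
  intros; unfold xi; destruct Rle_dec; [rewrite Rabs_Ropp|];
  [generalize (Rabs_phi_le a ((a + b) / 2) t) | generalize (Rabs_phi_le ((a + b) / 2) b t)];
  intros H'; (eapply Rle_trans; [apply H'|]); lra.
Qed.

(** * The times [t_n] and the windows around them *)

(* [tn n = 1 - rest n] holds by conversion. *)
Definition rest (n : nat) : R := exp (- INR n).
Definition gap (n : nat) : R := tn (S n) - tn n.
Definition ramp_end (n : nat) : R := tn n + 5 / 6 * gap n.

Lemma exp_1_bounds : 2 < exp 1 <= 3.
Proof. split; [generalize (exp_ineq1 1); lra | apply exp_le_3]. Qed.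

Lemma rest_pos n : 0 < rest n.
Proof. apply exp_pos. Qed.

Lemma rest_0 : rest 0 = 1.
Proof. unfold rest; simpl; rewrite Ropp_0; apply exp_0. Qed.

Lemma rest_S n : rest (S n) = rest n / exp 1.
Proof.
  unfold rest; rewrite S_INR, Ropp_plus_distr, exp_plus, (exp_Ropp 1); reflexivity.
Qed.

Lemma rest_lt_S n : rest (S n) < rest n.
Proof.
  rewrite rest_S; generalize (rest_pos n) exp_1_bounds; intros.
  apply Rmult_lt_reg_r with (exp 1); [lra|].
  unfold Rdiv; rewrite Rmult_assoc, Rinv_l; nra.
Qed.

Lemma rest_le n k : (n <= k)%nat -> rest k <= rest n.
Proof. induction 1; [lra | generalize (rest_lt_S m); lra]. Qed.

Lemma rest_small eps : 0 < eps -> exists n, rest n < eps.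
Proof.
  intros Heps; destruct (archimed_cor1 eps Heps) as [n [Hn Hn0]]; exists n.
  apply Rle_lt_trans with (/ INR n); [|easy].
  assert (0 < INR n) by (apply lt_0_INR; easy).
  unfold rest; rewrite exp_Ropp; apply Rinv_le_contravar; [easy|].
  generalize (exp_ineq1 (INR n) ltac:(lra)); lra.
Qed.

Lemma tn_le n k : (n <= k)%nat -> tn n <= tn k.
Proof. intros H; generalize (rest_le _ _ H); unfold tn, rest; lra. Qed.

Lemma tn_lt n k : (n < k)%nat -> tn n < tn k.
Proof.
  intros H; generalize (rest_le _ _ H) (rest_lt_S n); unfold tn, rest; lra.
Qed.

Lemma tn_lt_1 n : tn n < 1.
Proof. generalize (rest_pos n); unfold tn, rest; lra. Qed.

Lemma tn_0 : tn 0 = 0.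
Proof. generalize rest_0; unfold tn, rest; lra. Qed.

Lemma tn_ge_0 n : 0 <= tn n.
Proof. rewrite <- tn_0; apply tn_le; lia. Qed.

Lemma tn_block_unique m k u : tn m <= u < tn (S m) -> tn k <= u < tn (S k) -> m = k.
Proof.
  intros; destruct (Nat.lt_total m k) as [Hlt|[|Hlt]]; [|easy|];
  generalize (tn_le _ _ Hlt); lra.
Qed.

Lemma tn_block_of t : 0 <= t < 1 -> exists m, tn m <= t < tn (S m).
Proof.
  intros Ht; destruct (rest_small (1 - t)) as [n Hn]; [lra|].
  assert (Hlt : t < tn n) by (unfold tn; fold (rest n); lra); clear Hn.
  induction n as [|n IH]; [rewrite tn_0 in Hlt; lra|].
  destruct (Rlt_le_dec t (tn n)); [now apply IH | now exists n].
Qed.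

Lemma gap_eq n : gap n = rest n * (1 - / exp 1).
Proof. unfold gap, tn; fold (rest n) (rest (S n)); rewrite rest_S; unfold Rdiv; ring. Qed.

Lemma gap_pos n : 0 < gap n.
Proof. unfold gap; generalize (tn_lt n (S n) ltac:(lia)); lra. Qed.

Lemma gap_S n : gap (S n) = gap n / exp 1.
Proof. rewrite !gap_eq, rest_S; unfold Rdiv; ring. Qed.

Lemma gap_le_rest_S n : gap n <= 2 * rest (S n).
Proof.
  rewrite gap_eq, rest_S; generalize exp_1_bounds (rest_pos n); intros.
  apply Rmult_le_reg_r with (exp 1); [lra|].
  replace (rest n * (1 - / exp 1) * exp 1) with (rest n * (exp 1 - 1)) by (field; lra).
  replace (2 * (rest n / exp 1) * exp 1) with (2 * rest n) by (field; lra).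
  nra.
Qed.

Lemma tminus_S m : tminus (S m) = tn m + 4 / 5 * gap m.
Proof. unfold tminus, gap; replace (S m - 1)%nat with m by lia; field. Qed.

Lemma tplus_S m : tplus (S m) = tn (S m) + gap m / 5.
Proof. unfold tplus, gap; replace (S m - 1)%nat with m by lia; field. Qed.

Lemma tplus_0 : tplus 0 = 0.
Proof. unfold tplus; simpl; rewrite tn_0; field. Qed.

Lemma window_mid m : (tminus (S m) + tplus (S m)) / 2 = tn (S m).
Proof. rewrite tminus_S, tplus_S; unfold gap; field. Qed.

Lemma window_lt m : tminus (S m) < tn (S m) < tplus (S m).
Proof. rewrite tminus_S, tplus_S; generalize (gap_pos m); unfold gap; lra. Qed.

Lemma tplus_lt_tminus_S m : tplus (S m) < tminus (S (S m)).
Proof.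
  rewrite tplus_S, tminus_S, gap_S; generalize (gap_pos m) exp_1_bounds; intros.
  cut (gap m / 5 < 4 / 5 * (gap m / exp 1)); [lra|].
  apply Rmult_lt_reg_r with (exp 1); [lra|].
  replace (4 / 5 * (gap m / exp 1) * exp 1) with (4 / 5 * gap m) by (field; lra); nra.
Qed.

Lemma tplus_lt_ramp_end m : tplus (S m) < ramp_end (S m).
Proof.
  unfold ramp_end; rewrite tplus_S, gap_S; generalize (gap_pos m) exp_1_bounds; intros.
  cut (gap m / 5 < 5 / 6 * (gap m / exp 1)); [lra|].
  apply Rmult_lt_reg_r with (exp 1); [lra|].
  replace (5 / 6 * (gap m / exp 1) * exp 1) with (5 / 6 * gap m) by (field; lra); nra.
Qed.

Lemma tplus_le m : tn m <= tplus m <= tn m + 3 / 5 * gap m.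
Proof.
  destruct m as [|m]; [rewrite tplus_0, tn_0; generalize (gap_pos 0); lra|].
  rewrite tplus_S, gap_S; generalize (gap_pos m) exp_1_bounds; intros; split; [lra|].
  cut (gap m / 5 <= 3 / 5 * (gap m / exp 1)); [lra|].
  apply Rmult_le_reg_r with (exp 1); [lra|].
  replace (3 / 5 * (gap m / exp 1) * exp 1) with (3 / 5 * gap m) by (field; lra); nra.
Qed.

Lemma tminus_S_bounds m : tplus m < tminus (S m) < ramp_end m.
Proof. generalize (tplus_le m) (gap_pos m); rewrite tminus_S; unfold ramp_end; lra. Qed.

Lemma ramp_end_bounds m : tn m < ramp_end m < tn (S m).
Proof. unfold ramp_end; generalize (gap_pos m); unfold gap; lra. Qed.

Lemma tminus_lt_S a : tminus (S a) < tminus (S (S a)).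
Proof. generalize (window_lt a) (tplus_lt_tminus_S a); lra. Qed.

Lemma tminus_le a b : (a <= b)%nat -> tminus (S a) <= tminus (S b).
Proof. induction 1; [lra | generalize (tminus_lt_S m); lra]. Qed.

Lemma tplus_le_tminus a b : (a < b)%nat -> tplus (S a) <= tminus (S b).
Proof. intros; generalize (tplus_lt_tminus_S a) (tminus_le (S a) b ltac:(lia)); lra. Qed.

Lemma tplus_lt_1 a : tplus (S a) < 1.
Proof.
  generalize (tplus_lt_tminus_S a) (tn_lt_1 (S (S a))) (window_lt (S a)); lra.
Qed.

Lemma window_of t : tminus 1 <= t < 1 -> exists a, tminus (S a) <= t < tminus (S (S a)).
Proof.
  intros Ht; destruct (tn_block_of t) as [n [_ Hn]]; [generalize (tminus_S 0) (gap_pos 0) tn_0; lra|].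
  assert (Hlt : t < tminus (S (S n))) by (rewrite tminus_S; generalize (gap_pos (S n)); lra).
  clear Hn.
  induction n as [|n IH]; [now exists 0%nat|].
  destruct (Rlt_le_dec t (tminus (S (S n)))); [now apply IH | now exists (S n)].
Qed.

(** * Piecewise description of the accelerations *)

Ltac case_informative H :=
  match goal with |- context [excluded_middle_informative ?P] =>
    destruct (excluded_middle_informative P) as [H|H] end.

Lemma dpt_S a b n i : (1 <= n)%nat -> dpt a b n (S i) = dpt a b n i + (b - a) / (6 * INR n).
Proof.
  intros; unfold dpt; rewrite S_INR; assert (0 < INR n) by (apply lt_0_INR; lia).
  field; lra.
Qed.

Lemma dpt_le a b n i j : a < b -> (1 <= n)%nat -> (i <= j)%nat -> dpt a b n i <= dpt a b n j.
Proof.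
  intros Hab Hn Hij; unfold dpt; apply le_INR in Hij.
  assert (0 < INR n) by (apply lt_0_INR; lia).
  apply Rplus_le_compat_l, Rmult_le_compat_r; [apply Rlt_le, Rinv_0_lt_compat; lra|].
  apply Rmult_le_compat_r; lra.
Qed.

Lemma dpt_lt a b n i j : a < b -> (1 <= n)%nat -> (i < j)%nat -> dpt a b n i < dpt a b n j.
Proof.
  intros Hab Hn Hij; unfold dpt; apply lt_INR in Hij.
  assert (0 < INR n) by (apply lt_0_INR; lia).
  apply Rplus_lt_compat_l, Rmult_lt_compat_r; [apply Rinv_0_lt_compat; lra|].
  apply Rmult_lt_compat_r; lra.
Qed.

Lemma dpt_0 a b n : dpt a b n 0 = a + 5 / 6 * (b - a).
Proof. unfold dpt; simpl; unfold Rdiv; rewrite !Rmult_0_l; field. Qed.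

Lemma dpt_last a b n : (1 <= n)%nat -> dpt a b n n = b.
Proof. intros; unfold dpt; assert (0 < INR n) by (apply lt_0_INR; lia); field; lra. Qed.

Lemma psi_first a b n t : t <= dpt a b n 0 -> psi a b n t = phi a (dpt a b n 0) t.
Proof. intros; unfold psi; destruct Rle_dec; [easy|lra]. Qed.

(* Consecutive pieces of [psi] vanish at their common endpoints, so the
   piece picked by the choice operator does not matter. *)
Lemma psi_piece a b n i t : a < b -> (i < n)%nat ->
  dpt a b n i <= t <= dpt a b n (S i) -> psi a b n t = xi (dpt a b n i) (dpt a b n (S i)) t.
Proof.
  intros Hab Hi Ht.
  assert (Hn : (1 <= n)%nat) by lia.
  assert (Hpiece : forall k, dpt a b n k < dpt a b n (S k))
    by (intros; apply dpt_lt; [easy|easy|lia]).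
  unfold psi; destruct Rle_dec as [Hfirst|Hfirst].
  - assert (i = 0)%nat as ->.
    { destruct i; [easy|]. generalize (dpt_lt a b n 0 (S i) Hab Hn ltac:(lia)); lra. }
    replace t with (dpt a b n 0) by lra.
    rewrite xi_at_left, phi_right; [easy| |apply Hpiece]; rewrite dpt_0; lra.
  - case_informative Hex;
      [|exfalso; apply Hex; exists (S i); split; [lia|]; now replace (S i - 1)%nat with i by lia].
    destruct constructive_indefinite_description as [[|j] [Hj Hjt]]; [lia|]; cbn [proj1_sig].
    replace (S j - 1)%nat with j in * by lia.
    destruct (Nat.lt_total i j) as [Hij|[<-|Hij]]; [|easy|].
    + generalize (dpt_le a b n (S i) j Hab Hn Hij); intros.
      replace t with (dpt a b n j) at 1 by lra; replace t with (dpt a b n (S i)) by lra.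
      now rewrite xi_at_left, xi_at_right.
    + generalize (dpt_le a b n (S j) i Hab Hn Hij); intros.
      replace t with (dpt a b n (S j)) at 1 by lra; replace t with (dpt a b n i) by lra.
      now rewrite xi_at_left, xi_at_right.
Qed.

Lemma Rabs_psi_le a b n t : a < b -> (1 <= n)%nat -> Rabs (psi a b n t) <= (b - a) / 4.
Proof.
  intros Hab Hn; unfold psi; destruct Rle_dec.
  - eapply Rle_trans; [apply Rabs_phi_le|]; rewrite dpt_0; lra.
  - case_informative H; [|rewrite Rabs_R0; lra].
    destruct constructive_indefinite_description as [j [Hj Hjt]]; cbn [proj1_sig].
    generalize (dpt_lt a b n (j - 1) j Hab Hn ltac:(lia)); intros Hlt.
    eapply Rle_trans; [apply (Rabs_xi_le _ _ _ Hlt)|].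
    generalize (dpt_le a b n j n Hab Hn ltac:(lia)) (dpt_le a b n 0 (j - 1) Hab Hn ltac:(lia)).
    rewrite dpt_0, dpt_last by easy; lra.
Qed.

(* On [[t_m, t_(m+1)]], [a_y] is [psi] with [n = m + 1]; [knot m i] is its point [d_i],
   and [ramp_end m = d_0] ends the large bump. *)
Definition knot (m i : nat) : R := dpt (tn m) (tn (S m)) (S m) i.

Lemma knot_0 m : knot m 0 = ramp_end m.
Proof. unfold knot; rewrite dpt_0; reflexivity. Qed.

Lemma knot_last m : knot m (S m) = tn (S m).
Proof. unfold knot; apply dpt_last; lia. Qed.

Lemma knot_S m i : knot m (S i) = knot m i + gap m / (6 * INR (S m)).
Proof. unfold knot; apply dpt_S; lia. Qed.

Lemma knot_le m i j : (i <= j)%nat -> knot m i <= knot m j.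
Proof. intros; apply dpt_le; [apply tn_lt|..]; lia. Qed.

Lemma knot_lt_S m i : knot m i < knot m (S i).
Proof. apply dpt_lt; [apply tn_lt|..]; lia. Qed.

Lemma a_y_block m t : tn m <= t < tn (S m) -> a_y t = psi (tn m) (tn (S m)) (S m) t.
Proof.
  intros Ht; unfold a_y; case_informative H.
  - destruct constructive_indefinite_description as [[|k] [Hk Hkt]]; [lia|]; cbn [proj1_sig].
    replace (S k - 1)%nat with k in * by lia.
    now replace k with m by (apply (tn_block_unique m k t); easy).
  - exfalso; apply H; exists (S m); replace (S m - 1)%nat with m by lia; split; [lia|easy].
Qed.

Lemma a_y_outside t : t < 0 \/ 1 <= t -> a_y t = 0.
Proof.
  intros Ht; unfold a_y; case_informative H; [|easy].
  exfalso; destruct H as [k [_ Hkt]]; generalize (tn_ge_0 (k - 1)) (tn_lt_1 k); lra.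
Qed.

Lemma a_y_ramp m t : tn m <= t <= ramp_end m -> a_y t = phi (tn m) (ramp_end m) t.
Proof.
  intros Ht; generalize (ramp_end_bounds m); intros.
  rewrite (a_y_block m) by lra; rewrite psi_first; fold (knot m 0); rewrite knot_0; lra + easy.
Qed.

Lemma a_y_ripple m i t : (i <= m)%nat -> knot m i <= t <= knot m (S i) ->
  a_y t = xi (knot m i) (knot m (S i)) t.
Proof.
  intros Hi Ht.
  assert (Hend : knot m (S i) <= tn (S m)) by (rewrite <- knot_last; apply knot_le; lia).
  assert (Hstart : tn m < knot m i)
    by (generalize (ramp_end_bounds m) (knot_le m 0 i ltac:(lia)); rewrite knot_0; lra).
  destruct (Rlt_le_dec t (tn (S m))).
  - rewrite (a_y_block m) by lra; apply psi_piece; [apply tn_lt|..]; lia + easy.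
  - assert (t = tn (S m)) as -> by lra.
    replace (knot m (S i)) with (tn (S m)) by lra.
    rewrite xi_at_right by (generalize (knot_lt_S m i); lra).
    rewrite (a_y_ramp (S m)) by (generalize (ramp_end_bounds (S m)); lra); apply phi_left.
    apply ramp_end_bounds.
Qed.

Lemma Rabs_a_y_le t : t < 1 -> Rabs (a_y t) <= (1 - t) / 2.
Proof.
  intros Ht; destruct (Rlt_le_dec t 0); [rewrite a_y_outside, Rabs_R0 by lra; lra|].
  destruct (tn_block_of t) as [m Hm]; [lra|].
  rewrite (a_y_block m) by easy; eapply Rle_trans; [apply Rabs_psi_le; [apply tn_lt|]; lia|].
  generalize (gap_le_rest_S m); unfold gap, tn in *; fold (rest (S m)) in *; lra.
Qed.

Lemma coef_bounds tau n : 0 <= coef tau n <= 1.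
Proof.
  unfold coef; destruct (tau n) as [k|]; [|lra].
  assert (1 <= 2 ^ (n + k)) by (apply pow_R1_Rle; lra).
  split; [apply Rlt_le, Rinv_0_lt_compat; lra|].
  rewrite <- Rinv_1; apply Rinv_le_contravar; lra.
Qed.

Section Acceleration_x.
Variable tau : nat -> option nat.

Lemma a_x_no_window t : (forall a, ~ (tminus (S a) <= t < tplus (S a))) -> a_x tau t = 0.
Proof.
  intros Hno; unfold a_x; case_informative H; [|easy].
  destruct H as [[|k] [Hk Hkt]]; [lia|]; now destruct (Hno k).
Qed.

Lemma a_x_window_open a t : tminus (S a) <= t < tplus (S a) ->
  a_x tau t = - coef tau (S a) * xi (tminus (S a)) (tplus (S a)) t.
Proof.
  intros Ht; unfold a_x; case_informative H.
  - destruct constructive_indefinite_description as [[|b] [Hb Hbt]]; simpl; [lia|].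
    replace b with a; [easy|].
    destruct (Nat.lt_total b a) as [Hlt|[|Hlt]]; [|easy|];
    generalize (tplus_le_tminus _ _ Hlt); lra.
  - exfalso; apply H; exists (S a); split; [lia|easy].
Qed.

Lemma a_x_gap a t : tplus (S a) <= t <= tminus (S (S a)) -> a_x tau t = 0.
Proof.
  intros Ht; destruct (Req_dec t (tminus (S (S a)))) as [->|Hne].
  - generalize (window_lt (S a)); intros.
    rewrite (a_x_window_open (S a)), xi_at_left by lra; ring.
  - apply a_x_no_window; intros b Hb; destruct (Nat.lt_total b a) as [Hba|[->|Hab]]; [|lra|].
    + generalize (tplus_le_tminus b a Hba) (window_lt a); lra.
    + generalize (tminus_le (S a) b Hab); lra.
Qed.

Lemma a_x_window a t : tminus (S a) <= t <= tplus (S a) ->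
  a_x tau t = - coef tau (S a) * xi (tminus (S a)) (tplus (S a)) t.
Proof.
  intros Ht; generalize (window_lt a) (tplus_lt_tminus_S a); intros.
  destruct (Req_dec t (tplus (S a))) as [->|]; [|apply a_x_window_open; lra].
  rewrite (a_x_gap a), xi_at_right by lra; ring.
Qed.

Lemma a_x_init t : t <= tminus 1 -> a_x tau t = 0.
Proof.
  intros Ht; destruct (Req_dec t (tminus 1)) as [->|].
  - generalize (window_lt 0); intros; rewrite (a_x_window_open 0), xi_at_left by lra; ring.
  - apply a_x_no_window; intros b Hb; generalize (tminus_le 0 b ltac:(lia)); lra.
Qed.

Lemma a_x_ge_1 t : 1 <= t -> a_x tau t = 0.
Proof. intros; apply a_x_no_window; intros b Hb; generalize (tplus_lt_1 b); lra. Qed.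

Lemma Rabs_a_x_le t : t < 1 -> Rabs (a_x tau t) <= (1 - t) / 2.
Proof.
  intros Ht; destruct (excluded_middle_informative (exists a, tminus (S a) <= t < tplus (S a)))
    as [[a Ha]|Hno]; [|rewrite a_x_no_window, Rabs_R0 by firstorder; lra].
  rewrite (a_x_window_open a t Ha), Rabs_mult, Rabs_Ropp.
  generalize (coef_bounds tau (S a)) (window_lt a); intros Hc Hw.
  rewrite (Rabs_right (coef tau (S a))) by lra.
  generalize (Rabs_xi_le (tminus (S a)) (tplus (S a)) t ltac:(lra)); intros Hxi.
  generalize (Rabs_pos (xi (tminus (S a)) (tplus (S a)) t)); intros.
  assert (Hlen : (tplus (S a) - tminus (S a)) / 8 <= (1 - t) / 2).
  { generalize (gap_le_rest_S a) (tminus_S a) (tplus_S a); unfold gap.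
    replace (tn (S a)) with (1 - rest (S a)) by reflexivity; lra. }
  nra.
Qed.
End Acceleration_x.

(** * Continuity *)

Definition continuous_Icc (f : R -> R) (a b : R) : Prop :=
  forall x, a <= x <= b -> forall eps, 0 < eps -> exists del, 0 < del /\
    forall t, a <= t <= b -> Rabs (t - x) < del -> Rabs (f t - f x) < eps.

Lemma continuous_eps (f : R -> R) x : continuous f x ->
  forall eps, 0 < eps -> exists del, 0 < del /\
    forall t, Rabs (t - x) < del -> Rabs (f t - f x) < eps.
Proof.
  intros Hc eps Heps; apply continuity_pt_filterlim in Hc.
  destruct (proj1 (continuity_pt_locally f x) Hc (mkposreal eps Heps)) as [del Hdel].
  exists del; split; [apply cond_pos|].
  intros t Ht; apply Hdel, Ht.
Qed.

Lemma continuous_of_eps (f : R -> R) x :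
  (forall eps, 0 < eps -> exists del, 0 < del /\
     forall t, Rabs (t - x) < del -> Rabs (f t - f x) < eps) ->
  continuous f x.
Proof.
  intros H; apply continuity_pt_filterlim, continuity_pt_locally; intros [eps Heps].
  destruct (H eps Heps) as [del [Hdel Ht]]; exists (mkposreal del Hdel); intros t Hbt; apply Ht, Hbt.
Qed.

Lemma continuous_Icc_point f a : continuous_Icc f a a.
Proof.
  intros x Hx eps Heps; exists 1; split; [lra|]; intros t Ht _.
  replace t with x by lra; rewrite Rminus_eq_0, Rabs_R0; easy.
Qed.

Lemma continuous_Icc_ext (f g : R -> R) a b : (forall x, continuous g x) ->
  (forall t, a <= t <= b -> f t = g t) -> continuous_Icc f a b.
Proof.
  intros Hg Hfg x Hx eps Heps; destruct (continuous_eps g x (Hg x) eps Heps) as [del [Hdel Ht]].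
  exists del; split; [easy|]; intros t Hab Htx; rewrite !Hfg by lra; now apply Ht.
Qed.

Lemma continuous_Icc_glue f a b c : a <= b <= c ->
  continuous_Icc f a b -> continuous_Icc f b c -> continuous_Icc f a c.
Proof.
  intros Hb Hab Hbc x Hx eps Heps.
  destruct (Rlt_le_dec x b) as [Hxb|Hbx]; [|destruct (Req_dec x b) as [->|Hne]].
  - destruct (Hab x ltac:(lra) eps Heps) as [del [Hdel Ht]].
    exists (Rmin del (b - x)); split; [apply Rmin_pos; lra|]; intros t Htac Htx.
    generalize (Rmin_l del (b - x)) (Rmin_r del (b - x)) (Rle_abs (t - x)); intros.
    apply Ht; lra.
  - destruct (Hab b ltac:(lra) eps Heps) as [d1 [Hd1 H1]].
    destruct (Hbc b ltac:(lra) eps Heps) as [d2 [Hd2 H2]].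
    exists (Rmin d1 d2); split; [now apply Rmin_pos|]; intros t Htac Htx.
    generalize (Rmin_l d1 d2) (Rmin_r d1 d2); intros.
    destruct (Rle_lt_dec t b); [apply H1|apply H2]; lra.
  - destruct (Hbc x ltac:(lra) eps Heps) as [del [Hdel Ht]].
    exists (Rmin del (x - b)); split; [apply Rmin_pos; lra|]; intros t Htac Htx.
    generalize (Rmin_l del (x - b)) (Rmin_r del (x - b)) (Rle_abs (x - t));
    rewrite (Rabs_minus_sym x t); intros.
    apply Ht; lra.
Qed.

Lemma continuous_Icc_interior f a b x : continuous_Icc f a b -> a < x < b -> continuous f x.
Proof.
  intros Hf Hx; apply continuous_of_eps; intros eps Heps.
  destruct (Hf x ltac:(lra) eps Heps) as [del [Hdel Ht]].
  exists (Rmin del (Rmin (x - a) (b - x))); split; [repeat apply Rmin_pos; lra|].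
  intros t Htx; apply Rabs_def2 in Htx.
  generalize (Rmin_l del (Rmin (x - a) (b - x))) (Rmin_r del (Rmin (x - a) (b - x)))
    (Rmin_l (x - a) (b - x)) (Rmin_r (x - a) (b - x)); intros.
  apply Ht; [|apply Rabs_def1]; lra.
Qed.

Lemma filterlim_pair_Icc (f g : R -> R) a b x : continuous_Icc f a b -> continuous_Icc g a b ->
  a <= x <= b ->
  filterlim (fun u => (f u, g u)) (within (fun y => a <= y <= b) (locally x)) (locally (f x, g x)).
Proof.
  intros Hf Hg Hx P [eps HP].
  destruct (Hf x Hx eps (cond_pos eps)) as [d1 [Hd1 H1]].
  destruct (Hg x Hx eps (cond_pos eps)) as [d2 [Hd2 H2]].
  exists (mkposreal (Rmin d1 d2) (Rmin_pos _ _ Hd1 Hd2)); intros t Ht Hab; apply HP.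
  assert (Rabs (t - x) < Rmin d1 d2) by apply Ht.
  generalize (Rmin_l d1 d2) (Rmin_r d1 d2); intros.
  split; [apply H1|apply H2]; easy + lra.
Qed.

Lemma continuous_Icc_of_phi f c p q : (forall t, p <= t <= q -> f t = c * phi p q t) ->
  continuous_Icc f p q.
Proof.
  intros; apply (continuous_Icc_ext _ (fun t => c * phi p q t)); [|easy].
  intros; apply (continuous_mult (fun _ => c)); [apply continuous_const|apply continuous_phi].
Qed.

Lemma continuous_Icc_of_xi f c p q : p < q -> (forall t, p <= t <= q -> f t = c * xi p q t) ->
  continuous_Icc f p q.
Proof.
  intros Hpq Hf; apply continuous_Icc_glue with ((p + q) / 2); [lra|..];
  [apply (continuous_Icc_of_phi _ (- c)) | apply (continuous_Icc_of_phi _ c)];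
  intros; rewrite Hf by lra; [rewrite xi_left|rewrite xi_right]; lra + ring.
Qed.

Lemma continuous_decaying_at_1 (f : R -> R) :
  (forall t, 1 <= t -> f t = 0) -> (forall t, t < 1 -> Rabs (f t) <= (1 - t) / 2) ->
  (forall x, x < 1 -> exists a b, a < x < b /\ continuous_Icc f a b) ->
  forall x, continuous f x.
Proof.
  intros Hzero Hdecay Hloc x; destruct (Rlt_le_dec x 1) as [Hx|Hx];
  [|destruct (Req_dec x 1) as [->|Hne]].
  - destruct (Hloc x Hx) as [a [b [Hab Hf]]]; now apply (continuous_Icc_interior f a b).
  - apply continuous_of_eps; intros eps Heps; exists eps; split; [easy|]; intros t Ht.
    rewrite (Hzero 1), Rminus_0_r by lra.
    destruct (Rlt_le_dec t 1); [|rewrite Hzero, Rabs_R0 by lra; easy].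
    eapply Rle_lt_trans; [now apply Hdecay|]; apply Rabs_def2 in Ht; lra.
  - apply (continuous_Icc_interior f 1 (x + 1)); [|lra].
    apply (continuous_Icc_ext _ (fun _ => 0)); [intros; apply continuous_const|].
    intros; apply Hzero; lra.
Qed.

Lemma continuous_Icc_a_y_ramp m : continuous_Icc a_y (tn m) (ramp_end m).
Proof. apply (continuous_Icc_of_phi _ 1); intros; rewrite Rmult_1_l; now apply a_y_ramp. Qed.

Lemma continuous_Icc_a_y_block m : continuous_Icc a_y (tn m) (tn (S m)).
Proof.
  generalize (ramp_end_bounds m); intros.
  apply continuous_Icc_glue with (ramp_end m); [lra|apply continuous_Icc_a_y_ramp|].
  rewrite <- knot_0, <- knot_last.
  assert (Hk : forall k, (k <= S m)%nat -> continuous_Icc a_y (knot m 0) (knot m k)).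
  { induction k as [|k IH]; intros Hk; [apply continuous_Icc_point|].
    apply continuous_Icc_glue with (knot m k);
      [generalize (knot_le m 0 k ltac:(lia)) (knot_lt_S m k); lra|apply IH; lia|].
    apply (continuous_Icc_of_xi _ 1); [apply knot_lt_S|].
    intros; rewrite Rmult_1_l; apply a_y_ripple; [lia|easy]. }
  apply Hk; lia.
Qed.

Lemma continuous_Icc_a_y m : continuous_Icc a_y 0 (tn m).
Proof.
  induction m as [|m IH]; [rewrite tn_0; apply continuous_Icc_point|].
  apply continuous_Icc_glue with (tn m); [split; [apply tn_ge_0|apply tn_le; lia]|easy|].
  apply continuous_Icc_a_y_block.
Qed.

Lemma continuous_a_y x : continuous a_y x.
Proof.
  apply continuous_decaying_at_1; [intros; apply a_y_outside; lra|apply Rabs_a_y_le|].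
  clear x; intros x Hx; destruct (rest_small (1 - x)) as [n Hn]; [lra|].
  exists (x - 1), (tn n); split; [unfold tn; fold (rest n); lra|].
  apply continuous_Icc_glue with 0; [generalize (tn_ge_0 n); lra| |apply continuous_Icc_a_y].
  apply (continuous_Icc_ext _ (fun _ => 0)); [intros; apply continuous_const|].
  intros t Ht; destruct (Rlt_le_dec t 0); [apply a_y_outside; lra|].
  replace t with (tn 0) by (rewrite tn_0; lra).
  rewrite (a_y_ramp 0), phi_left; [easy|apply ramp_end_bounds|generalize (ramp_end_bounds 0); lra].
Qed.

Section Continuity_x.
Variable tau : nat -> option nat.

Lemma continuous_Icc_a_x_window a : continuous_Icc (a_x tau) (tminus (S a)) (tminus (S (S a))).
Proof.
  generalize (window_lt a) (tplus_lt_tminus_S a); intros.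
  apply continuous_Icc_glue with (tplus (S a)); [lra|..].
  - apply (continuous_Icc_of_xi _ (- coef tau (S a))); [lra|]; intros; now apply a_x_window.
  - apply (continuous_Icc_ext _ (fun _ => 0)); [intros; apply continuous_const|].
    intros; now apply (a_x_gap tau a).
Qed.

Lemma continuous_Icc_a_x lo a : lo <= tminus 1 -> continuous_Icc (a_x tau) lo (tminus (S a)).
Proof.
  intros Hlo; induction a as [|a IH].
  - apply (continuous_Icc_ext _ (fun _ => 0)); [intros; apply continuous_const|].
    intros; apply a_x_init; lra.
  - apply continuous_Icc_glue with (tminus (S a)); [|easy|apply continuous_Icc_a_x_window].
    generalize (tminus_le 0 a ltac:(lia)) (tminus_lt_S a); lra.
Qed.

Lemma continuous_a_x x : continuous (a_x tau) x.
Proof.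
  apply continuous_decaying_at_1; [apply a_x_ge_1|apply Rabs_a_x_le|].
  clear x; intros x Hx; destruct (rest_small (1 - x)) as [n Hn]; [lra|].
  exists (x - 1), (tminus (S n)); split.
  - rewrite tminus_S; generalize (gap_pos n); unfold tn; fold (rest n); lra.
  - apply continuous_Icc_a_x; rewrite tminus_S, tn_0; generalize (gap_pos 0); lra.
Qed.
End Continuity_x.

(** * Double integrals of bumps *)

Section Primitives.
Variable f : R -> R.
Hypothesis f_cont : forall x, continuous f x.

Lemma ex_RInt_cont a b : ex_RInt f a b.
Proof. apply (ex_RInt_continuous (V := R_CompleteNormedModule)); intros; apply f_cont. Qed.

Lemma RInt_0_split p t : RInt f 0 t = RInt f 0 p + RInt f p t :> R.
Proof. rewrite <- (RInt_Chasles f 0 p t) by apply ex_RInt_cont; reflexivity. Qed.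

Lemma RInt_primitive p t (F g : R -> R) : p <= t -> (forall x, p <= x <= t -> f x = g x) ->
  (forall x, is_derive F x (g x)) -> (forall x, continuous g x) -> RInt f p t = F t - F p :> R.
Proof.
  intros Hpt Hfg HF Hg; rewrite (RInt_ext f g).
  - apply is_RInt_unique, (is_RInt_derive F g); intros; [apply HF|apply Hg].
  - intros x Hx; rewrite Rmin_left, Rmax_right in Hx by lra; apply Hfg; lra.
Qed.

Lemma continuous_RInt_0 x : continuous (fun t : R => RInt f 0 t) x.
Proof.
  apply (ex_derive_continuous (fun t => RInt f 0 t)); exists (f x).
  apply is_derive_RInt with 0; [|apply f_cont].
  apply filter_forall; intros; apply RInt_correct, ex_RInt_cont.
Qed.
End Primitives.

Definition RInt2 (f : R -> R) (t : R) : R := RInt (fun u => RInt f 0 u) 0 t.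

Lemma continuous_RInt2 (f : R -> R) x : (forall x, continuous f x) -> continuous (RInt2 f) x.
Proof. intros; apply continuous_RInt_0; intros; now apply continuous_RInt_0. Qed.

Lemma RInt2_phi (f : R -> R) c Y p q : (forall x, continuous f x) -> p < q ->
  RInt f 0 p = 0 :> R -> RInt2 f p = Y -> (forall x, p <= x <= q -> f x = c * phi p q x) ->
  forall t, p <= t <= q ->
  RInt f 0 t = c * phi_prim p q t :> R /\ RInt2 f t = Y + c * phi_prim2 p q t.
Proof.
  intros Hf Hpq Hv Hs Hfphi.
  assert (Hc : forall g : R -> R, (forall x, continuous g x) ->
    forall x, continuous (fun t => c * g t) x).
  { intros; apply (continuous_mult (fun _ => c)); [apply continuous_const|auto]. }
  assert (Hvt : forall t, p <= t <= q -> RInt f 0 t = c * phi_prim p q t :> R).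
  { intros t Ht; rewrite (RInt_0_split f Hf p t), Hv.
    rewrite (RInt_primitive f p t (fun x => c * phi_prim p q x) (fun x => c * phi p q x)).
    - rewrite phi_prim_left by easy; ring.
    - lra.
    - intros; apply Hfphi; lra.
    - intros; apply is_derive_scal, is_derive_phi_prim, Hpq.
    - apply Hc, continuous_phi. }
  intros t Ht; split; [now apply Hvt|]; unfold RInt2.
  rewrite (RInt_0_split _ (continuous_RInt_0 f Hf) p t); fold (RInt2 f p); rewrite Hs.
  rewrite (RInt_primitive _ p t (fun x => c * phi_prim2 p q x) (fun x => c * phi_prim p q x)).
  - rewrite phi_prim2_left by easy; ring.
  - lra.
  - intros; apply Hvt; lra.
  - intros; apply is_derive_scal, is_derive_phi_prim2, Hpq.
  - apply Hc; intros; now apply continuous_phi_prim.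
Qed.

Lemma RInt2_xi (f : R -> R) c Y p q : (forall x, continuous f x) -> p < q ->
  RInt f 0 p = 0 :> R -> RInt2 f p = Y -> (forall x, p <= x <= q -> f x = c * xi p q x) ->
  (forall t, p <= t <= (p + q) / 2 -> RInt2 f t = Y - c * phi_prim2 p ((p + q) / 2) t) /\
  (forall t, (p + q) / 2 <= t <= q ->
     RInt2 f t = Y - c * ((q - p) / 2) ^ 3 / (8 * PI) + c * phi_prim2 ((p + q) / 2) q t) /\
  RInt f 0 q = 0 :> R /\ RInt2 f q = Y.
Proof.
  intros Hf Hpq Hv Hs Hfxi; set (r := (p + q) / 2).
  assert (Hleft : forall t, p <= t <= r ->
    RInt f 0 t = - c * phi_prim p r t :> R /\ RInt2 f t = Y + - c * phi_prim2 p r t).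
  { apply RInt2_phi; [easy|unfold r; lra|easy|easy|].
    intros; rewrite Hfxi, xi_left by (unfold r in *; lra); unfold r; ring. }
  destruct (Hleft r ltac:(unfold r; lra)) as [Hvr Hsr].
  rewrite phi_prim_right, phi_prim2_right, Rmult_0_r in * by (unfold r; lra).
  assert (Hright : forall t, r <= t <= q ->
    RInt f 0 t = c * phi_prim r q t :> R /\
    RInt2 f t = (Y + - c * ((r - p) ^ 3 / (8 * PI))) + c * phi_prim2 r q t).
  { apply RInt2_phi; [easy|unfold r; lra|easy|easy|].
    intros; rewrite Hfxi, xi_right by (unfold r in *; lra); easy. }
  replace (r - p) with ((q - p) / 2) in * by (unfold r; field).
  split; [intros t Ht; rewrite (proj2 (Hleft t Ht)); ring|].
  split; [intros t Ht; rewrite (proj2 (Hright t Ht)); unfold Rdiv; ring|].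
  destruct (Hright q ltac:(unfold r; lra)) as [Hvq Hsq].
  rewrite phi_prim_right, phi_prim2_right in * by (unfold r; lra).
  split; [rewrite Hvq; ring|rewrite Hsq].
  replace (q - r) with ((q - p) / 2) by (unfold r; field); ring.
Qed.

Lemma RInt2_xi_dip (f : R -> R) Y p q : (forall x, continuous f x) -> p < q ->
  RInt f 0 p = 0 :> R -> RInt2 f p = Y -> (forall x, p <= x <= q -> f x = xi p q x) ->
  (forall t, p <= t <= q -> Y - ((q - p) / 2) ^ 3 / (8 * PI) <= RInt2 f t <= Y) /\
  RInt f 0 q = 0 :> R /\ RInt2 f q = Y.
Proof.
  intros Hf Hpq Hv Hs Hfxi.
  destruct (RInt2_xi f 1 Y p q) as [Hl [Hr Hend]]; [easy..|intros; rewrite Rmult_1_l; auto|].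
  split; [|easy]; intros t Ht; destruct (Rle_lt_dec t ((p + q) / 2)).
  - rewrite Hl by lra; generalize (phi_prim2_bounds p ((p + q) / 2) t ltac:(lra) ltac:(lra)).
    replace ((p + q) / 2 - p) with ((q - p) / 2) by field; lra.
  - rewrite Hr by lra; generalize (phi_prim2_bounds ((p + q) / 2) q t ltac:(lra) ltac:(lra)).
    replace (q - (p + q) / 2) with ((q - p) / 2) by field; lra.
Qed.

(** * The vertical motion *)

Fixpoint y_level (m : nat) : R :=
  match m with O => 0 | S k => y_level k + (5 / 6 * gap k) ^ 3 / (8 * PI) end.
Definition dip (m : nat) : R := (gap m / (12 * INR (S m))) ^ 3 / (8 * PI).

Lemma dip_pos m : 0 < dip m.
Proof.
  unfold dip; generalize (gap_pos m) (lt_0_INR (S m) ltac:(lia)) PI_RGT_0; intros.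
  apply Rdiv_lt_0_compat; [apply pow_lt, Rdiv_lt_0_compat|]; lra.
Qed.

Lemma s_y_ramp_phase m : v_y (tn m) = 0 -> s_y (tn m) = y_level m ->
  (forall t, tn m <= t <= ramp_end m -> s_y t = y_level m + phi_prim2 (tn m) (ramp_end m) t) /\
  v_y (ramp_end m) = 0 /\ s_y (ramp_end m) = y_level (S m).
Proof.
  intros Hv Hs; generalize (ramp_end_bounds m); intros.
  assert (Hramp : forall t, tn m <= t <= ramp_end m ->
    v_y t = 1 * phi_prim (tn m) (ramp_end m) t /\
    s_y t = y_level m + 1 * phi_prim2 (tn m) (ramp_end m) t).
  { apply (RInt2_phi a_y 1); [apply continuous_a_y|lra|easy|easy|].
    intros; rewrite Rmult_1_l; now apply a_y_ramp. }
  destruct (Hramp (ramp_end m) ltac:(lra)) as [Hv1 Hs1].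
  split; [intros t Ht; rewrite (proj2 (Hramp t Ht)); ring|].
  rewrite Hv1, Hs1, phi_prim_right, phi_prim2_right by lra; split; [ring|].
  simpl; unfold ramp_end; replace (tn m + 5 / 6 * gap m - tn m) with (5 / 6 * gap m) by ring; ring.
Qed.

Lemma s_y_ripple_phase m : v_y (ramp_end m) = 0 -> s_y (ramp_end m) = y_level (S m) ->
  (forall t, ramp_end m <= t <= tn (S m) -> y_level (S m) - dip m <= s_y t <= y_level (S m)) /\
  v_y (tn (S m)) = 0 /\ s_y (tn (S m)) = y_level (S m).
Proof.
  intros Hv Hs; rewrite <- knot_0, <- knot_last in *; set (Y := y_level (S m)) in *.
  assert (Hdip : forall i, ((knot m (S i) - knot m i) / 2) ^ 3 / (8 * PI) = dip m).
  { intros; rewrite knot_S; unfold dip; generalize (lt_0_INR (S m) ltac:(lia)); intros.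
    f_equal; f_equal; field; lra. }
  assert (Hk : forall k, (k <= S m)%nat ->
    (forall t, knot m 0 <= t <= knot m k -> Y - dip m <= s_y t <= Y) /\
    v_y (knot m k) = 0 /\ s_y (knot m k) = Y).
  { induction k as [|k IH]; intros Hk.
    - split; [|easy]; intros t Ht; replace t with (knot m 0) by lra.
      generalize (dip_pos m); lra.
    - destruct (IH ltac:(lia)) as [Hbk [Hvk Hsk]].
      destruct (RInt2_xi_dip a_y Y (knot m k) (knot m (S k))) as [Hb Hend];
        [apply continuous_a_y|apply knot_lt_S|easy|easy|intros; apply a_y_ripple; [lia|easy]|].
      rewrite Hdip in Hb; split; [|easy]; intros t Ht.
      destruct (Rle_lt_dec t (knot m k)); [apply Hbk|apply Hb]; lra. }
  apply Hk; lia.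
Qed.

Lemma s_y_at_tn m : v_y (tn m) = 0 /\ s_y (tn m) = y_level m.
Proof.
  induction m as [|m [Hv Hs]].
  - rewrite tn_0; unfold v_y, s_y; rewrite !RInt_point; easy.
  - destruct (s_y_ramp_phase m Hv Hs) as [_ [Hv' Hs']].
    now destruct (s_y_ripple_phase m Hv' Hs') as [_ Hend].
Qed.

Lemma s_y_ramp m t : tn m <= t <= ramp_end m ->
  s_y t = y_level m + phi_prim2 (tn m) (ramp_end m) t.
Proof. destruct (s_y_at_tn m) as [Hv Hs]; apply (s_y_ramp_phase m Hv Hs). Qed.

Lemma s_y_dip m t : ramp_end m <= t <= tn (S m) -> y_level (S m) - dip m <= s_y t <= y_level (S m).
Proof.
  destruct (s_y_at_tn m) as [Hv Hs]; destruct (s_y_ramp_phase m Hv Hs) as [_ [Hv' Hs']].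
  apply (s_y_ripple_phase m Hv' Hs').
Qed.

(** * The horizontal motion *)

Section Position_x.
Variable tau : nat -> option nat.

Lemma window_half_len a : (tplus (S a) - tminus (S a)) / 2 = gap a / 5.
Proof. rewrite tplus_S, tminus_S; unfold gap; field. Qed.

Lemma s_x_init : (forall t, 0 <= t <= tminus 1 -> s_x tau t = 0) /\
  v_x tau (tminus 1) = 0 /\ s_x tau (tminus 1) = 0.
Proof.
  assert (H1 : 0 < tminus 1) by (rewrite tminus_S, tn_0; generalize (gap_pos 0); lra).
  assert (H : forall t, 0 <= t <= tminus 1 -> v_x tau t = 0 * phi_prim 0 (tminus 1) t /\
    s_x tau t = 0 + 0 * phi_prim2 0 (tminus 1) t).
  { apply (RInt2_phi (a_x tau)); [apply continuous_a_x|easy| | |];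
      [exact (RInt_point 0 _)|exact (RInt_point 0 _)|].
    intros; rewrite a_x_init by lra; ring. }
  split; [intros t Ht; rewrite (proj2 (H t Ht)); ring|].
  destruct (H (tminus 1) ltac:(lra)) as [Hv Hs]; rewrite Hv, Hs; split; ring.
Qed.

Lemma s_x_window_phase a : v_x tau (tminus (S a)) = 0 -> s_x tau (tminus (S a)) = 0 ->
  (forall t, tminus (S a) <= t <= tn (S a) ->
     s_x tau t = coef tau (S a) * phi_prim2 (tminus (S a)) (tn (S a)) t) /\
  (forall t, tn (S a) <= t <= tplus (S a) ->
     s_x tau t =
     coef tau (S a) * ((gap a / 5) ^ 3 / (8 * PI) - phi_prim2 (tn (S a)) (tplus (S a)) t)) /\
  (forall t, tplus (S a) <= t <= tminus (S (S a)) -> s_x tau t = 0) /\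
  v_x tau (tminus (S (S a))) = 0 /\ s_x tau (tminus (S (S a))) = 0.
Proof.
  intros Hv Hs; generalize (window_lt a) (tplus_lt_tminus_S a) (window_half_len a); intros.
  destruct (RInt2_xi (a_x tau) (- coef tau (S a)) 0 (tminus (S a)) (tplus (S a)))
    as [Hl [Hr [Hvq Hsq]]]; [apply continuous_a_x|lra|easy|easy|intros; now apply a_x_window|].
  rewrite window_mid in Hl, Hr; rewrite window_half_len in Hr.
  assert (Hgap : forall t, tplus (S a) <= t <= tminus (S (S a)) ->
    v_x tau t = 0 * phi_prim (tplus (S a)) (tminus (S (S a))) t /\
    s_x tau t = 0 + 0 * phi_prim2 (tplus (S a)) (tminus (S (S a))) t).
  { apply (RInt2_phi (a_x tau)); [apply continuous_a_x|lra|easy|easy|].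
    intros; rewrite (a_x_gap tau a) by easy; ring. }
  split; [intros t Ht; change (s_x tau t) with (RInt2 (a_x tau) t); rewrite Hl by easy; ring|].
  split; [intros t Ht; change (s_x tau t) with (RInt2 (a_x tau) t); rewrite Hr by easy|].
  { unfold Rdiv; ring. }
  split; [intros t Ht; rewrite (proj2 (Hgap t Ht)); ring|].
  destruct (Hgap (tminus (S (S a))) ltac:(lra)) as [Hv' Hs']; rewrite Hv', Hs'; split; ring.
Qed.

Lemma s_x_at_tminus a : v_x tau (tminus (S a)) = 0 /\ s_x tau (tminus (S a)) = 0.
Proof.
  induction a as [|a [Hv Hs]]; [apply s_x_init|].
  now destruct (s_x_window_phase a Hv Hs) as [_ [_ [_ Hend]]].
Qed.

Lemma s_x_window_left a t : tminus (S a) <= t <= tn (S a) ->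
  s_x tau t = coef tau (S a) * phi_prim2 (tminus (S a)) (tn (S a)) t.
Proof. destruct (s_x_at_tminus a) as [Hv Hs]; apply (s_x_window_phase a Hv Hs). Qed.

Lemma s_x_window_right a t : tn (S a) <= t <= tplus (S a) ->
  s_x tau t =
  coef tau (S a) * ((gap a / 5) ^ 3 / (8 * PI) - phi_prim2 (tn (S a)) (tplus (S a)) t).
Proof. destruct (s_x_at_tminus a) as [Hv Hs]; apply (s_x_window_phase a Hv Hs). Qed.

Lemma s_x_gap a t : tplus a <= t <= tminus (S a) -> s_x tau t = 0.
Proof.
  destruct a as [|a]; [rewrite tplus_0; apply s_x_init|].
  destruct (s_x_at_tminus a) as [Hv Hs]; apply (s_x_window_phase a Hv Hs).
Qed.
End Position_x.

(** * The endpoint *)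

Lemma continuous_value_at_1 (f : R -> R) L C (u : nat -> R) : continuous f 1 ->
  (forall m, Rabs (u m - 1) <= rest m) -> (forall m, Rabs (f (u m) - L) <= C * rest m) -> f 1 = L.
Proof.
  intros Hf Hu HfL; apply Rminus_diag_uniq.
  destruct (Req_dec (f 1 - L) 0) as [|Hne]; [easy|exfalso].
  set (eps := Rabs (f 1 - L)); assert (Heps : 0 < eps) by now apply Rabs_pos_lt.
  destruct (continuous_eps f 1 Hf (eps / 2)) as [del [Hdel Hclose]]; [lra|].
  assert (HC : 0 <= C) by (generalize (HfL 0%nat) (Rabs_pos (f (u 0%nat) - L)) (rest_pos 0); nra).
  destruct (rest_small (Rmin del (eps / (2 * (C + 1))))) as [m Hm];
    [apply Rmin_pos; [easy|apply Rdiv_lt_0_compat; lra]|].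
  generalize (Rmin_l del (eps / (2 * (C + 1)))) (Rmin_r del (eps / (2 * (C + 1)))) (rest_pos m).
  intros.
  assert (Hfm : Rabs (f (u m) - f 1) < eps / 2) by (apply Hclose; generalize (Hu m); lra).
  assert (HCm : C * rest m < eps / 2).
  { apply Rle_lt_trans with ((C + 1) * rest m); [nra|].
    apply Rmult_lt_reg_l with (/ (C + 1)); [apply Rinv_0_lt_compat; lra|].
    rewrite <- Rmult_assoc, Rinv_l by lra.
    replace (/ (C + 1) * (eps / 2)) with (eps / (2 * (C + 1))) by (field; lra); lra. }
  generalize (Rabs_triang (f 1 - f (u m)) (f (u m) - L)) (HfL m);
  rewrite Rabs_minus_sym in Hfm; replace (f 1 - f (u m) + (f (u m) - L)) with (f 1 - L) by ring.
  fold eps; lra.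
Qed.

Definition y_limit : R := 5 ^ 3 * (exp 1 - 1) ^ 3 / (6 ^ 3 * 8 * PI * (exp 1 ^ 3 - 1)).

Lemma inv_exp_1_bounds : 0 < / exp 1 < 1.
Proof.
  generalize exp_1_bounds; intros; split; [apply Rinv_0_lt_compat; lra|].
  generalize (Rinv_lt_contravar 1 (exp 1) ltac:(lra) ltac:(lra)); rewrite Rinv_1; easy.
Qed.

Lemma y_level_closed m : y_level m = y_limit * (1 - rest m ^ 3).
Proof.
  generalize exp_1_bounds PI_RGT_0; intros.
  assert (exp 1 ^ 3 - 1 > 0) by (simpl; nra).
  induction m as [|m IH]; [rewrite rest_0; simpl; ring|].
  simpl y_level; rewrite IH, gap_eq, rest_S; unfold y_limit; simpl pow.
  field; repeat split; lra.
Qed.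

Lemma y_limit_pos : 0 < y_limit.
Proof.
  unfold y_limit; generalize exp_1_bounds PI_RGT_0; intros.
  assert (exp 1 ^ 3 - 1 > 0) by (simpl; nra).
  apply Rdiv_lt_0_compat; [apply Rmult_lt_0_compat; apply pow_lt; lra|].
  apply Rmult_lt_0_compat; [|lra]; apply Rmult_lt_0_compat; [|lra].
  apply Rmult_lt_0_compat; [apply pow_lt|]; lra.
Qed.

Lemma y_level_bounds m : y_limit - y_limit * rest m <= y_level m < y_limit.
Proof.
  rewrite y_level_closed; generalize y_limit_pos (rest_pos m) (rest_le 0 m ltac:(lia)).
  rewrite rest_0; intros; set (q := rest m) in *.
  assert (0 < q ^ 3 <= q) by (split; [apply pow_lt; lra|simpl; nra]).
  split; nra.
Qed.

Lemma y_level_lt_S m : y_level m < y_level (S m).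
Proof.
  simpl; generalize (gap_pos m) PI_RGT_0; intros.
  assert (0 < (5 / 6 * gap m) ^ 3 / (8 * PI))
    by (apply Rdiv_lt_0_compat; [apply pow_lt|]; lra).
  lra.
Qed.

Lemma y_level_le m k : (m <= k)%nat -> y_level m <= y_level k.
Proof. induction 1; [lra | generalize (y_level_lt_S m0); lra]. Qed.

Lemma continuous_s_y x : continuous s_y x.
Proof. apply (continuous_RInt2 a_y), continuous_a_y. Qed.

Lemma continuous_s_x tau x : continuous (s_x tau) x.
Proof. apply (continuous_RInt2 (a_x tau)), continuous_a_x. Qed.

Lemma s_y_1 : s_y 1 = y_limit.
Proof.
  apply (continuous_value_at_1 s_y y_limit y_limit tn); [apply continuous_s_y| |].
  - intros m; rewrite Rabs_left; generalize (rest_pos m); unfold tn; fold (rest m); lra.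
  - intros m; rewrite (proj2 (s_y_at_tn m)), Rabs_left1; generalize (y_level_bounds m); lra.
Qed.

Lemma s_x_1 tau : s_x tau 1 = 0.
Proof.
  apply (continuous_value_at_1 (s_x tau) 0 0 (fun m => tminus (S m))); [apply continuous_s_x| |].
  - intros m; assert (gap m < rest m)
      by (rewrite gap_eq; generalize inv_exp_1_bounds (rest_pos m); nra).
    rewrite tminus_S, Rabs_left; generalize (gap_pos m); unfold tn; fold (rest m); lra.
  - intros m; rewrite (proj2 (s_x_at_tminus tau m)); rewrite Rminus_0_r, Rabs_R0; lra.
Qed.

(** * Separation properties *)

Lemma s_y_ramp_end m : s_y (ramp_end m) = y_level (S m).
Proof.
  generalize (ramp_end_bounds m); intros; rewrite (s_y_ramp m), phi_prim2_right by lra.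
  simpl; unfold ramp_end; f_equal; f_equal; f_equal; ring.
Qed.

Lemma s_y_ramp_lt m t t' : tn m <= t -> t < t' -> t' <= ramp_end m -> s_y t < s_y t'.
Proof.
  intros; generalize (ramp_end_bounds m); intros; rewrite !(s_y_ramp m) by lra.
  generalize (phi_prim2_lt (tn m) (ramp_end m) t t'); lra.
Qed.

Lemma s_y_ramp_bounds m t : tn m <= t <= ramp_end m -> y_level m <= s_y t <= y_level (S m).
Proof.
  intros; generalize (ramp_end_bounds m); intros; rewrite <- s_y_ramp_end, !(s_y_ramp m) by lra.
  generalize (phi_prim2_bounds (tn m) (ramp_end m) t)
    (phi_prim2_le (tn m) (ramp_end m) t (ramp_end m)); lra.
Qed.

Lemma s_y_ramp_gt m t : tn m < t <= ramp_end m -> y_level m < s_y t.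
Proof.
  intros; generalize (ramp_end_bounds m); intros; rewrite (s_y_ramp m) by lra.
  generalize (phi_prim2_lt (tn m) (ramp_end m) (tn m) t) (phi_prim2_left (tn m) (ramp_end m)); lra.
Qed.

Lemma s_y_ramp_lt_end m t : tn m <= t < ramp_end m -> s_y t < y_level (S m).
Proof. intros; rewrite <- s_y_ramp_end; apply (s_y_ramp_lt m); lra. Qed.

Lemma s_y_tplus_below_dips m : s_y (tplus m) < y_level (S m) - dip m.
Proof.
  generalize (tplus_le m) (ramp_end_bounds m) (gap_pos m) PI_RGT_0 PI_ge_3; intros.
  assert (Hl : ramp_end m - tn m = 5 / 6 * gap m) by (unfold ramp_end; ring).
  set (h := (ramp_end m - tn m) ^ 3 / (8 * PI)).
  assert (Hle : s_y (tplus m) <= y_level m + h * (3 / 4 + 1 / (2 * PI))).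
  { unfold h; rewrite (s_y_ramp m), <- phi_prim2_three_quarters by lra.
    apply Rplus_le_compat_l, phi_prim2_le; lra. }
  assert (Hlevel : y_level (S m) = y_level m + h) by (unfold h; rewrite Hl; reflexivity).
  assert (Hdip : dip m <= h / 1000).
  { unfold dip; replace (h / 1000) with ((gap m / 12) ^ 3 / (8 * PI))
      by (unfold h; rewrite Hl; field; lra).
    generalize (pos_INR m); rewrite S_INR; intros.
    apply Rmult_le_compat_r; [apply Rlt_le, Rinv_0_lt_compat; lra|].
    apply pow_incr; split; [apply Rdiv_le_0_compat; lra|].
    apply Rmult_le_compat_l; [lra|apply Rinv_le_contravar; lra]. }
  assert (Hpi : 1 / (2 * PI) <= 1 / 6)
    by (apply Rmult_le_reg_r with (6 * PI); [lra|]; field_simplify; lra).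
  assert (0 < h) by (apply Rdiv_lt_0_compat; [apply pow_lt|]; lra).
  nra.
Qed.

Lemma s_y_window_left m t : tminus (S m) < t <= tn (S m) -> s_y t <= y_level (S m).
Proof.
  intros; generalize (tminus_S_bounds m) (ramp_end_bounds m) (tplus_le m); intros.
  destruct (Rle_lt_dec t (ramp_end m)); [generalize (s_y_ramp_bounds m t ltac:(lra)); lra|].
  generalize (s_y_dip m t ltac:(lra)); lra.
Qed.

Lemma s_y_window_right m t : tn (S m) < t <= tplus (S m) -> y_level (S m) < s_y t.
Proof. intros; generalize (tplus_lt_ramp_end m); intros; apply (s_y_ramp_gt (S m)); lra. Qed.

Lemma s_y_window_lower m t : tminus (S m) < t <= tplus (S m) -> s_y (tplus m) < s_y t.
Proof.
  intros; generalize (tminus_S_bounds m) (ramp_end_bounds m) (tplus_le m)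
    (s_y_tplus_below_dips m) (dip_pos m); intros.
  destruct (Rle_lt_dec t (ramp_end m)); [apply (s_y_ramp_lt m); lra|].
  destruct (Rle_lt_dec t (tn (S m))); [generalize (s_y_dip m t ltac:(lra)); lra|].
  generalize (s_y_window_right m t ltac:(lra)); lra.
Qed.

Lemma s_y_window_upper m t : tminus (S m) < t <= tplus (S m) -> s_y t <= s_y (tplus (S m)).
Proof.
  intros; generalize (tplus_lt_ramp_end m) (window_lt m); intros.
  destruct (Rle_lt_dec t (tn (S m))).
  - generalize (s_y_window_left m t ltac:(lra)) (s_y_ramp_bounds (S m) (tplus (S m)) ltac:(lra)).
    lra.
  - destruct (Req_dec t (tplus (S m))) as [->|]; [lra|].
    apply Rlt_le, (s_y_ramp_lt (S m)); lra.
Qed.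

Lemma s_y_tplus_le m k : (m <= k)%nat -> s_y (tplus m) <= s_y (tplus k).
Proof.
  induction 1 as [|k Hk IH]; [lra|].
  generalize (window_lt k); intros.
  enough (s_y (tplus k) < s_y (tplus (S k))) by lra.
  apply Rlt_le_trans with (s_y (tn (S k))); [apply s_y_window_lower|apply s_y_window_upper]; lra.
Qed.

Lemma s_y_window_sep m k t t' : (m < k)%nat ->
  tminus (S m) < t <= tplus (S m) -> tminus (S k) < t' <= tplus (S k) -> s_y t < s_y t'.
Proof.
  intros; generalize (s_y_window_upper m t ltac:(lra)) (s_y_tplus_le (S m) k ltac:(lia))
    (s_y_window_lower k t' ltac:(lra)); lra.
Qed.

Section Separation_x.
Variable tau : nat -> option nat.

Lemma s_x_window_pos m t : 0 < coef tau (S m) -> tminus (S m) < t < tplus (S m) -> 0 < s_x tau t.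
Proof.
  intros Hc Ht; generalize (window_lt m) PI_RGT_0 (gap_pos m); intros.
  destruct (Rle_lt_dec t (tn (S m))).
  - rewrite (s_x_window_left tau m) by lra; apply Rmult_lt_0_compat; [easy|].
    rewrite <- (phi_prim2_left (tminus (S m)) (tn (S m))) by lra; apply phi_prim2_lt; lra.
  - rewrite (s_x_window_right tau m) by lra; apply Rmult_lt_0_compat; [easy|].
    generalize (phi_prim2_lt (tn (S m)) (tplus (S m)) t (tplus (S m)) ltac:(lra) ltac:(lra)).
    rewrite phi_prim2_right by lra; rewrite tplus_S.
    replace (tn (S m) + gap m / 5 - tn (S m)) with (gap m / 5) by ring; lra.
Qed.

Lemma s_x_window_left_lt m t t' : 0 < coef tau (S m) ->
  tminus (S m) <= t -> t < t' -> t' <= tn (S m) -> s_x tau t < s_x tau t'.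
Proof.
  intros; generalize (window_lt m); intros; rewrite !(s_x_window_left tau m) by lra.
  apply Rmult_lt_compat_l; [easy|apply phi_prim2_lt; lra].
Qed.

Lemma s_x_window_right_gt m t t' : 0 < coef tau (S m) ->
  tn (S m) <= t -> t < t' -> t' <= tplus (S m) -> s_x tau t' < s_x tau t.
Proof.
  intros; generalize (window_lt m); intros; rewrite !(s_x_window_right tau m) by lra.
  apply Rmult_lt_compat_l; [easy|].
  generalize (phi_prim2_lt (tn (S m)) (tplus (S m)) t t'); lra.
Qed.

Lemma s_x_zero_or_active_window t : 0 <= t <= 1 ->
  s_x tau t = 0 \/ exists m, 0 < coef tau (S m) /\ tminus (S m) < t < tplus (S m).
Proof.
  intros Ht; destruct (Req_dec t 1) as [->|]; [left; apply s_x_1|].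
  destruct (Rlt_le_dec t (tminus 1)); [left; apply s_x_init; lra|].
  destruct (window_of t) as [a Ha]; [lra|]; generalize (window_lt a) (tplus_lt_tminus_S a); intros.
  destruct (Rle_lt_dec (tplus (S a)) t); [left; apply (s_x_gap tau (S a)); lra|].
  destruct (Req_dec t (tminus (S a))) as [->|]; [left; apply s_x_at_tminus|].
  destruct (coef_bounds tau (S a)) as [Hc _]; destruct (Req_dec (coef tau (S a)) 0) as [Hc0|].
  - left; destruct (Rle_lt_dec t (tn (S a)));
      [rewrite (s_x_window_left tau a) | rewrite (s_x_window_right tau a)]; rewrite ?Hc0; lra + ring.
  - right; exists a; split; lra.
Qed.
End Separation_x.

(** * Injectivity and the simple parametrisation *)

Definition on_ramp (t : R) : Prop := t = 1 \/ exists m, tn m <= t < ramp_end m.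

Lemma s_y_on_ramp_lt t t' : on_ramp t -> on_ramp t' -> t < t' -> s_y t < s_y t'.
Proof.
  intros [->|[m Hm]] [->|[k Hk]] Htt'; [lra|generalize (ramp_end_bounds k) (tn_lt_1 (S k)); lra| |].
  - rewrite s_y_1; generalize (s_y_ramp_lt_end m t Hm) (y_level_bounds (S m)); lra.
  - generalize (ramp_end_bounds m) (ramp_end_bounds k); intros.
    assert (Hmk : (m <= k)%nat)
      by (destruct (Nat.le_gt_cases m k); [easy|generalize (tn_le (S k) m ltac:(lia)); lra]).
    destruct (Nat.eq_dec m k) as [<-|]; [apply (s_y_ramp_lt m); lra|].
    generalize (s_y_ramp_lt_end m t Hm) (y_level_le (S m) k ltac:(lia))
      (s_y_ramp_bounds k t' ltac:(lra)); lra.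
Qed.

Section Reparametrisation.
Variable tau : nat -> option nat.

Definition kept (t : R) : Prop :=
  t = 1 \/ exists m, tn m <= t < tn (S m) /\ (coef tau (S m) = 0 -> t < ramp_end m).

Lemma kept_range t : kept t -> 0 <= t <= 1.
Proof. intros [->|[m [Hm _]]]; [lra|generalize (tn_ge_0 m) (tn_lt_1 (S m)); lra]. Qed.

Lemma kept_on_axis t : kept t -> s_x tau t = 0 -> on_ramp t.
Proof.
  intros [->|[m [Hm Hc]]] Hx; [now left|right; exists m; split; [lra|]].
  destruct (Rlt_le_dec t (ramp_end m)) as [|Hge]; [easy|exfalso].
  destruct (coef_bounds tau (S m)) as [Hc0 _]; destruct (Req_dec (coef tau (S m)) 0) as [Hz|Hnz];
    [specialize (Hc Hz); lra|].
  generalize (tminus_S_bounds m) (window_lt m); intros.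
  generalize (s_x_window_pos tau m t ltac:(lra) ltac:(lra)); lra.
Qed.

Lemma s_window_injective m t t' : 0 < coef tau (S m) ->
  tminus (S m) < t < tplus (S m) -> tminus (S m) < t' < tplus (S m) ->
  s_x tau t = s_x tau t' -> s_y t = s_y t' -> t = t'.
Proof.
  intros Hc Ht Ht' Hx Hy; generalize (window_lt m); intros.
  assert (Hsep : forall a b, tminus (S m) < a < tplus (S m) -> tminus (S m) < b < tplus (S m) ->
    a < b -> s_x tau a = s_x tau b -> s_y a = s_y b -> False).
  { intros a b Ha Hb Hab Hxab Hyab; destruct (Rle_lt_dec b (tn (S m))).
    - generalize (s_x_window_left_lt tau m a b Hc ltac:(lra) Hab ltac:(lra)); lra.
    - destruct (Rle_lt_dec (tn (S m)) a).
      + generalize (s_x_window_right_gt tau m a b Hc ltac:(lra) Hab ltac:(lra)); lra.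
      + generalize (s_y_window_left m a ltac:(lra)) (s_y_window_right m b ltac:(lra)); lra. }
  destruct (Rtotal_order t t') as [Hlt|[|Hlt]]; [exfalso; now apply (Hsep t t')|easy|].
  exfalso; now apply (Hsep t' t).
Qed.

(* On the axis [s_y] is monotone along the ramps; off the axis the windows are separated
   by [s_y]. *)
Lemma s_injective_on_kept t t' : kept t -> kept t' ->
  s_x tau t = s_x tau t' -> s_y t = s_y t' -> t = t'.
Proof.
  intros Ht Ht' Hx Hy.
  destruct (s_x_zero_or_active_window tau t (kept_range t Ht)) as [H0|[m [Hc Hw]]];
  destruct (s_x_zero_or_active_window tau t' (kept_range t' Ht')) as [H0'|[k [Hc' Hw']]].
  - generalize (kept_on_axis t Ht H0) (kept_on_axis t' Ht' ltac:(lra)); intros Hr Hr'.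
    destruct (Rtotal_order t t') as [Hlt|[|Hlt]]; [|easy|];
    [generalize (s_y_on_ramp_lt t t' Hr Hr' Hlt) | generalize (s_y_on_ramp_lt t' t Hr' Hr Hlt)]; lra.
  - generalize (s_x_window_pos tau k t' Hc' Hw'); lra.
  - generalize (s_x_window_pos tau m t Hc Hw); lra.
  - destruct (Nat.lt_total m k) as [Hlt|[<-|Hlt]].
    + generalize (s_y_window_sep m k t t' Hlt ltac:(lra) ltac:(lra)); lra.
    + now apply (s_window_injective m).
    + generalize (s_y_window_sep k m t' t Hlt ltac:(lra) ltac:(lra)); lra.
Qed.

(* When [M_(m+1)] does not halt, the curve retraces the dips of block [m] along the
   y-axis; the reparametrisation then runs through block [m] on its ramp only. *)
Definition reparam_block (m : nat) (u : R) : R :=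
  if Rlt_dec 0 (coef tau (S m)) then u else tn m + 5 / 6 * (u - tn m).

Definition reparam (u : R) : R :=
  match excluded_middle_informative (exists m, tn m <= u < tn (S m)) with
  | left H => reparam_block (proj1_sig (constructive_indefinite_description _ H)) u
  | right _ => u
  end.

Lemma reparam_eq m u : tn m <= u < tn (S m) -> reparam u = reparam_block m u.
Proof.
  intros Hu; unfold reparam; case_informative H; [|exfalso; apply H; now exists m].
  destruct constructive_indefinite_description as [k Hk]; cbn [proj1_sig].
  now rewrite (tn_block_unique k m u).
Qed.

Lemma reparam_1 : reparam 1 = 1.
Proof.
  unfold reparam; case_informative H; [|easy].
  exfalso; destruct H as [m Hm]; generalize (tn_lt_1 (S m)); lra.
Qed.

Lemma reparam_tn m : reparam (tn m) = tn m.
Proof.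
  rewrite (reparam_eq m) by (generalize (tn_lt m (S m) ltac:(lia)); lra).
  unfold reparam_block; destruct Rlt_dec; ring.
Qed.

Lemma reparam_block_range m u : tn m <= u < tn (S m) ->
  tn m <= reparam_block m u < tn (S m) /\ (coef tau (S m) = 0 -> reparam_block m u < ramp_end m).
Proof.
  intros; generalize (ramp_end_bounds m); unfold reparam_block, ramp_end, gap in *.
  destruct Rlt_dec; intros; split; lra.
Qed.

Lemma reparam_kept u : 0 <= u <= 1 -> kept (reparam u).
Proof.
  intros Hu; destruct (Req_dec u 1) as [->|]; [left; apply reparam_1|].
  destruct (tn_block_of u) as [m Hm]; [lra|].
  right; exists m; rewrite (reparam_eq m) by easy; now apply reparam_block_range.
Qed.

Lemma reparam_injective u u' : 0 <= u <= 1 -> 0 <= u' <= 1 -> reparam u = reparam u' -> u = u'.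
Proof.
  intros Hu Hu' Heq.
  assert (Hblock : forall v, 0 <= v < 1 ->
    exists m, tn m <= v < tn (S m) /\ tn m <= reparam v < tn (S m)).
  { intros v Hv; destruct (tn_block_of v Hv) as [m Hm]; exists m; split; [easy|].
    rewrite (reparam_eq m) by easy; now apply reparam_block_range. }
  destruct (Req_dec u 1) as [->|]; destruct (Req_dec u' 1) as [->|]; [easy| | |].
  - rewrite reparam_1 in Heq; destruct (Hblock u' ltac:(lra)) as [k [_ Hk]].
    generalize (tn_lt_1 (S k)); lra.
  - rewrite reparam_1 in Heq; destruct (Hblock u ltac:(lra)) as [k [_ Hk]].
    generalize (tn_lt_1 (S k)); lra.
  - destruct (Hblock u ltac:(lra)) as [m [Hm1 Hm2]].
    destruct (Hblock u' ltac:(lra)) as [k [Hk1 Hk2]].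
    rewrite Heq in Hm2; replace k with m in * by (apply (tn_block_unique m k (reparam u')); easy).
    rewrite (reparam_eq m u), (reparam_eq m u') in Heq by easy.
    unfold reparam_block in Heq; destruct Rlt_dec; lra.
Qed.

Lemma reparam_near_1 u : 0 <= u <= 1 -> Rabs (reparam u - 1) <= 3 * Rabs (u - 1).
Proof.
  intros Hu; destruct (Req_dec u 1) as [->|]; [rewrite reparam_1, Rminus_eq_0, Rabs_R0; lra|].
  destruct (tn_block_of u) as [m Hm]; [lra|]; rewrite (reparam_eq m) by easy.
  destruct (reparam_block_range m u Hm) as [Hr _]; generalize (tn_lt_1 (S m)); intro.
  rewrite !Rabs_left by lra.
  assert (Hrest : rest m <= 3 * rest (S m))
    by (rewrite rest_S; generalize exp_1_bounds (rest_pos m); intros;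
        apply Rmult_le_reg_r with (exp 1); [lra|]; field_simplify; nra).
  unfold tn in *; fold (rest m) (rest (S m)) in *; lra.
Qed.

Lemma s_ramp_end_tn_S m : coef tau (S m) = 0 ->
  s_x tau (ramp_end m) = s_x tau (tn (S m)) /\ s_y (ramp_end m) = s_y (tn (S m)).
Proof.
  intros Hc; generalize (tminus_S_bounds m) (ramp_end_bounds m) (window_lt m); intros.
  rewrite !(s_x_window_left tau m), Hc, s_y_ramp_end, (proj2 (s_y_at_tn (S m))) by lra.
  split; ring.
Qed.

Lemma reparam_onto_ramp m x : coef tau (S m) = 0 -> tn m <= x < ramp_end m ->
  exists u, 0 <= u <= 1 /\ reparam u = x.
Proof.
  intros Hc Hx; generalize (ramp_end_bounds m) (tn_ge_0 m) (tn_lt_1 (S m)); intros.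
  exists (tn m + 6 / 5 * (x - tn m)); unfold ramp_end, gap in *; split; [lra|].
  rewrite (reparam_eq m) by lra; unfold reparam_block; destruct Rlt_dec; [lra|field].
Qed.

Lemma s_dip_on_ramp m t : coef tau (S m) = 0 -> ramp_end m <= t <= tn (S m) ->
  exists x, tn m <= x <= ramp_end m /\ s_x tau x = s_x tau t /\ s_y x = s_y t.
Proof.
  intros Hc Ht.
  generalize (tminus_S_bounds m) (ramp_end_bounds m) (tplus_le m) (window_lt m); intros.
  assert (Hx0 : forall x, tplus m <= x <= tn (S m) -> s_x tau x = 0).
  { intros x Hx; destruct (Rle_lt_dec x (tminus (S m))); [apply (s_x_gap tau m); lra|].
    rewrite (s_x_window_left tau m), Hc by lra; ring. }
  generalize (s_y_dip m t Ht) (s_y_tplus_below_dips m) (s_y_ramp_end m); intros.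
  destruct (IVT_gen_consistent s_y (tplus m) (ramp_end m) (s_y t) continuous_s_y) as [x [Hx Hxt]];
    [rewrite Rmin_left, Rmax_right; lra|].
  rewrite Rmin_left, Rmax_right in Hx by lra.
  exists x; split; [lra|]; rewrite !Hx0 by lra; easy.
Qed.

Lemma reparam_covers t : 0 <= t <= 1 ->
  exists u, 0 <= u <= 1 /\ s_x tau (reparam u) = s_x tau t /\ s_y (reparam u) = s_y t.
Proof.
  intros Ht; destruct (Req_dec t 1) as [->|]; [exists 1; rewrite reparam_1; split; [lra|easy]|].
  destruct (tn_block_of t) as [m Hm]; [lra|]; generalize (ramp_end_bounds m) (tn_lt_1 (S m)); intros.
  destruct (Rlt_dec 0 (coef tau (S m))) as [Hpos|Hzero].
  - exists t; rewrite (reparam_eq m) by easy; unfold reparam_block; destruct Rlt_dec; easy.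
  - assert (Hc : coef tau (S m) = 0) by (generalize (coef_bounds tau (S m)); lra).
    destruct (Rlt_le_dec t (ramp_end m)).
    + destruct (reparam_onto_ramp m t Hc ltac:(lra)) as [u [Hu <-]]; now exists u.
    + destruct (s_dip_on_ramp m t Hc ltac:(lra)) as [x [Hx [<- <-]]].
      destruct (Rlt_le_dec x (ramp_end m)).
      * destruct (reparam_onto_ramp m x Hc ltac:(lra)) as [u [Hu <-]]; now exists u.
      * exists (tn (S m)); rewrite reparam_tn; replace x with (ramp_end m) by lra.
        destruct (s_ramp_end_tn_S m Hc); split; [generalize (tn_ge_0 (S m)); lra|easy].
Qed.

Lemma continuous_Icc_reparam_comp (F : R -> R) : (forall x, continuous F x) ->
  (forall m, coef tau (S m) = 0 -> F (ramp_end m) = F (tn (S m))) ->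
  continuous_Icc (fun u => F (reparam u)) 0 1.
Proof.
  intros Fc Hend.
  assert (Hblock : forall m, continuous_Icc (fun u => F (reparam u)) (tn m) (tn (S m))).
  { intros m; apply (continuous_Icc_ext _ (fun u => F (reparam_block m u))).
    - intros x; unfold reparam_block; destruct Rlt_dec; [apply Fc|].
      apply (continuous_comp (fun u => tn m + 5 / 6 * (u - tn m)) F); [|apply Fc].
      apply (ex_derive_continuous (fun u => tn m + 5 / 6 * (u - tn m))); auto_derive; easy.
    - intros u Hu; destruct (Req_dec u (tn (S m))) as [->|]; [|now rewrite (reparam_eq m) by lra].
      rewrite reparam_tn; unfold reparam_block; destruct Rlt_dec as [|Hc]; [easy|].
      symmetry; apply Hend; generalize (coef_bounds tau (S m)); lra. }
  assert (Hinit : forall m, continuous_Icc (fun u => F (reparam u)) 0 (tn m)).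
  { induction m as [|m IH]; [rewrite tn_0; apply continuous_Icc_point|].
    apply continuous_Icc_glue with (tn m); [|easy|apply Hblock].
    split; [apply tn_ge_0|apply tn_le; lia]. }
  intros x Hx eps Heps; destruct (Req_dec x 1) as [->|].
  - rewrite reparam_1; destruct (continuous_eps F 1 (Fc 1) eps Heps) as [del [Hdel Hclose]].
    exists (del / 3); split; [lra|]; intros t Ht Htx.
    apply Hclose; generalize (reparam_near_1 t Ht); lra.
  - destruct (rest_small (1 - x)) as [n Hn]; [lra|].
    assert (Hxn : x < tn n) by (unfold tn; fold (rest n); lra).
    destruct (Hinit n x ltac:(lra) eps Heps) as [del [Hdel Hclose]].
    exists (Rmin del (tn n - x)); split; [apply Rmin_pos; lra|]; intros t Ht Htx.
    generalize (Rmin_l del (tn n - x)) (Rmin_r del (tn n - x)) (Rle_abs (t - x)); intros.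
    apply Hclose; lra.
Qed.
End Reparametrisation.

Theorem corollary3p7 (tau : nat -> option nat) :
  s_vec tau 0 = (0, 0) /\
  s_vec tau 1 = (0, 5 ^ 3 * (exp 1 - 1) ^ 3 / (6 ^ 3 * 8 * PI * (exp 1 ^ 3 - 1))) /\
  simple_curve_from_to (Gamma tau) (s_vec tau 0) (s_vec tau 1).
Proof.
  assert (Hstart : s_vec tau 0 = (0, 0)) by (unfold s_vec, s_x, s_y; rewrite !RInt_point; easy).
  assert (Hend : s_vec tau 1 = (0, y_limit)) by (unfold s_vec; rewrite s_x_1, s_y_1; easy).
  split; [exact Hstart|split; [exact Hend|]].
  exists 0, 1, (fun u => s_vec tau (reparam tau u)); unfold s_vec.
  split; [lra|split; [|split; [|split; [|split]]]].
  - intros x Hx; refine (filterlim_pair_Icc (fun u => s_x tau (reparam tau u))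
      (fun u => s_y (reparam tau u)) 0 1 x _ _ Hx).
    + apply (continuous_Icc_reparam_comp tau (s_x tau)); [apply continuous_s_x|].
      intros m Hc; apply (proj1 (s_ramp_end_tn_S tau m Hc)).
    + apply (continuous_Icc_reparam_comp tau s_y); [apply continuous_s_y|].
      intros m Hc; apply (proj2 (s_ramp_end_tn_S tau m Hc)).
  - intros u u' Hu Hu' Heq; injection Heq as Hx Hy.
    apply (reparam_injective tau); [easy|easy|].
    now apply (s_injective_on_kept tau); [apply reparam_kept..| |].
  - intros z; split.
    + intros [t [Ht <-]]; destruct (reparam_covers tau t Ht) as [u [Hu [Hx Hy]]].
      exists u; split; [easy|]; unfold s_vec; now rewrite Hx, Hy.
    + intros [u [Hu <-]]; exists (reparam tau u); split; [|easy].
      apply (kept_range tau), reparam_kept, Hu.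
  - now rewrite <- tn_0, reparam_tn, tn_0.
  - now rewrite reparam_1.
Qed.
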